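(* Let $X$ and $Y$ be finite connected undirected graphs and $f:X\to Y$ a morphism which is a weak equivalence for the closed model on $\mathrm{UGph}$ defined by counting the family $(c^p_U)_{p\ge1}$, i.e. for every $p\ge1$ the map $\mathrm{Hom}_{\mathrm{UGph}}(c^p_U,X)\to\mathrm{Hom}_{\mathrm{UGph}}(c^p_U,Y)$, $h\mapsto f\circ h$, is bijective. Then $f$ is an isomorphism.
   Context: An undirected graph $X$ consists of a set of nodes $X(0)$, a set of half-arcs $X(1)$, maps $s,t:X(1)\to X(0)$ (source, target) and an involution $\iota$ of $X(1)$ with $s\circ\iota=t$ (fixed points of $\iota$ are allowed). A morphism $f:X\to Y$ is a pair $f_0:X(0)\to Y(0)$, $f_1:X(1)\to Y(1)$ with $f_0\circ s=s\circ f_1$, $f_0\circ t=t\circ f_1$, $f_1\circ\iota=\iota\circ f_1$; $\mathrm{UGph}$ is the resulting category. An arc is a pair $\{u,\iota(u)\}$; connectedness refers to the graph whose vertices are the nodes and whose edges join the source and target of each half-arc. For $p\ge1$, $c^p_U$ is the undirected graph with nodes $\mathbb{Z}/p\mathbb{Z}$ and half-arcs $[n]^+,[n]^-$ ($[n]\in\mathbb{Z}/p$), with $s([n]^+)=[n]$, $t([n]^+)=[n+1]$, $s([n]^-)=[n+1]$, $t([n]^-)=[n]$, $\iota([n]^+)=[n]^-$. *)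

From mathcomp Require Import all_boot.
Set Implicit Arguments. Unset Strict Implicit. Unset Printing Implicit Defensive.

(* A finite undirected graph: finite set of nodes, finite set of half-arcs,
   source/target maps and an involution iota with s o iota = t
   (fixed points of iota allowed). *)
Record ugraph := UGraph {
  node : finType;
  harc : finType;
  src : harc -> node;
  tgt : harc -> node;
  inv : harc -> harc;
  inv_invol : involutive inv;
  src_inv : forall a, src (inv a) = tgt a
}.

Record ugmor (X Y : ugraph) := UGMor {
  mor0 : {ffun node X -> node Y};
  mor1 : {ffun harc X -> harc Y};
  ugmorP : [forall a : harc X,
              [&& mor0 (src a) == src (mor1 a),
                  mor0 (tgt a) == tgt (mor1 a) &
                  mor1 (inv a) == inv (mor1 a)]]
}.

Lemma ugmor_comp_proof (X Y Z : ugraph) (g : ugmor Y Z) (f : ugmor X Y) :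
  [forall a : harc X,
     [&& [ffun x => mor0 g (mor0 f x)] (src a)
           == src ([ffun u => mor1 g (mor1 f u)] a),
         [ffun x => mor0 g (mor0 f x)] (tgt a)
           == tgt ([ffun u => mor1 g (mor1 f u)] a) &
         [ffun u => mor1 g (mor1 f u)] (inv a)
           == inv ([ffun u => mor1 g (mor1 f u)] a)]].
Proof.
apply/forallP => a; rewrite !ffunE.
have /forallP /(_ a) /and3P [/eqP f1 /eqP f2 /eqP f3] := ugmorP f.
have /forallP Hg := ugmorP g.
have /and3P [/eqP g1 /eqP g2 /eqP g3] := Hg (mor1 f a).
by rewrite f1 f2 f3 g1 g2 g3 !eqxx.
Qed.

Definition ugcomp (X Y Z : ugraph) (g : ugmor Y Z) (f : ugmor X Y) : ugmor X Z :=
  UGMor (ugmor_comp_proof g f).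

Lemma ugid_proof (X : ugraph) :
  [forall a : harc X,
     [&& [ffun x : node X => x] (src a) == src ([ffun u : harc X => u] a),
         [ffun x : node X => x] (tgt a) == tgt ([ffun u : harc X => u] a) &
         [ffun u : harc X => u] (inv a) == inv ([ffun u : harc X => u] a)]].
Proof. by apply/forallP => a; rewrite !ffunE !eqxx. Qed.

Definition ugid (X : ugraph) : ugmor X X := UGMor (ugid_proof X).

Definition ugiso (X Y : ugraph) (f : ugmor X Y) : Prop :=
  exists g : ugmor Y X, ugcomp g f = ugid X /\ ugcomp f g = ugid Y.

Definition ug_adj (X : ugraph) : rel (node X) :=
  fun x y => [exists a : harc X, (src a == x) && (tgt a == y)].

Definition ug_connected (X : ugraph) : Prop :=
  (exists x : node X, True) /\ forall x y : node X, connect (@ug_adj X) x y.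

(* The cycle graph c^p_U: nodes Z/pZ (= 'I_p), half-arcs [n]^+ = (n,true),
   [n]^- = (n,false). *)
Definition cyc_src (p : nat) (a : 'I_p * bool) : 'I_p :=
  if a.2 then a.1 else ordS a.1.
Definition cyc_tgt (p : nat) (a : 'I_p * bool) : 'I_p :=
  if a.2 then ordS a.1 else a.1.
Definition cyc_inv (p : nat) (a : 'I_p * bool) : 'I_p * bool := (a.1, ~~ a.2).

Lemma cyc_inv_invol (p : nat) : involutive (@cyc_inv p).
Proof. by case=> n b; rewrite /cyc_inv /= negbK. Qed.

Lemma cyc_src_inv (p : nat) (a : 'I_p * bool) :
  cyc_src (cyc_inv a) = cyc_tgt a.
Proof. by case: a => n [|]. Qed.

Definition cU (p : nat) : ugraph :=
  @UGraph 'I_p ('I_p * bool)%type (@cyc_src p) (@cyc_tgt p) (@cyc_inv p)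
    (@cyc_inv_invol p) (@cyc_src_inv p).

From Pilot Require Import Defs.
From mathcomp Require Import all_boot.
Set Implicit Arguments. Unset Strict Implicit. Unset Printing Implicit Defensive.

(* The key observation is that morphisms c^p_U -> Z are the same thing as
   closed walks of length p in Z: p half-arcs a_0, ..., a_(p-1) with
   t(a_i) = s(a_(i+1 mod p)).  Then:
   - the walks (u, iota u) of length 2 show that f is injective and
     surjective on half-arcs;
   - surjectivity on nodes follows from connectedness of Y, since every node
     of Y other than the image of a chosen node of X emits a half-arc;
   - for injectivity on nodes, a walk in X between two nodes with the same
     image maps to a closed walk in Y; its lift is again closed and, by
     injectivity on half-arcs, equals the original walk, which is therefore
     closed;
   - a morphism bijective on nodes and on half-arcs is an isomorphism. *)

Lemma cycle_nthP (T : Type) (e : rel T) (x0 : T) (s : seq T) :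
  reflect (forall i, i < size s -> e (nth x0 s i) (nth x0 s (i.+1 %% size s)))
          (cycle e s).
Proof.
case: s => [|x p]; first by constructor.
have nth_head i : i < (size p).+1 -> nth x0 (x :: rcons p x) i = nth x0 (x :: p) i.
  by case: i => //= i; rewrite ltnS nth_rcons => ->.
have nth_next i : i < (size p).+1 ->
    nth x0 (rcons p x) i = nth x0 (x :: p) (i.+1 %% (size p).+1).
  rewrite ltnS leq_eqVlt => /predU1P[->|lt_i_p]; first by rewrite modnn nth_rcons ltnn eqxx.
  by rewrite modn_small // nth_rcons lt_i_p.
rewrite /cycle; apply: (iffP (pathP x0)) => /= closed i; rewrite ?size_rcons => lt_i_p.
- by rewrite -nth_head // -nth_next //; apply: closed; rewrite size_rcons.
- by rewrite nth_head // nth_next //; apply: closed.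
Qed.

Lemma cycle_tnthP (T : Type) (e : rel T) (n : nat) (t : n.-tuple T) :
  reflect (forall i : 'I_n, e (tnth t i) (tnth t (ordS i))) (cycle e t).
Proof.
case: n t => [|n] t; first by rewrite tuple0; constructor; case.
have x0 : T := tnth t ord0.
apply: (iffP (cycle_nthP _ x0 _)); rewrite size_tuple => closed i.
  by rewrite !(tnth_nth x0); apply: closed.
by move=> lt_i_n; have := closed (Ordinal lt_i_n); rewrite !(tnth_nth x0).
Qed.

Lemma cycle_consE (T : Type) (e : rel T) (a : T) (s : seq T) :
  cycle e (a :: s) = path e a s && e (last a s) a.
Proof. by rewrite /cycle rcons_path. Qed.

Section MorphismLaws.
Variables (X Y : ugraph) (f : ugmor X Y).

Lemma mor_src (a : harc X) : mor0 f (src a) = src (mor1 f a).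
Proof. by have /forallP/(_ a)/and3P[/eqP] := ugmorP f. Qed.

Lemma mor_tgt (a : harc X) : mor0 f (tgt a) = tgt (mor1 f a).
Proof. by have /forallP/(_ a)/and3P[_ /eqP] := ugmorP f. Qed.

Lemma mor_inv (a : harc X) : mor1 f (Defs.inv a) = Defs.inv (mor1 f a).
Proof. by have /forallP/(_ a)/and3P[_ _ /eqP] := ugmorP f. Qed.

End MorphismLaws.

Lemma tgt_inv (Z : ugraph) (a : harc Z) : tgt (Defs.inv a) = src a.
Proof. by rewrite -src_inv inv_invol. Qed.

Lemma ugmor_ext (X Y : ugraph) (g h : ugmor X Y) :
  mor0 g =1 mor0 h -> mor1 g =1 mor1 h -> g = h.
Proof.
case: g h => [g0 g1 gP] [h0 h1 hP] /= /ffunP E0 /ffunP E1.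
by move: gP hP; rewrite E0 E1 => gP hP; rewrite (bool_irrelevance gP hP).
Qed.

Section MakeMorphism.
Variables (X Y : ugraph) (g0 : node X -> node Y) (g1 : harc X -> harc Y).
Hypotheses (g_src : forall a, g0 (src a) = src (g1 a))
           (g_tgt : forall a, g0 (tgt a) = tgt (g1 a))
           (g_inv : forall a, g1 (Defs.inv a) = Defs.inv (g1 a)).

Lemma mk_ugmorP : [forall a : harc X,
  [&& [ffun x => g0 x] (src a) == src ([ffun u => g1 u] a),
      [ffun x => g0 x] (tgt a) == tgt ([ffun u => g1 u] a) &
      [ffun u => g1 u] (Defs.inv a) == Defs.inv ([ffun u => g1 u] a)]].
Proof. by apply/forallP => a; rewrite !ffunE g_src g_tgt g_inv !eqxx. Qed.

Definition mk_ugmor : ugmor X Y := UGMor mk_ugmorP.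

Lemma mk_ugmor0 : mor0 mk_ugmor =1 g0. Proof. exact: ffunE. Qed.
Lemma mk_ugmor1 : mor1 mk_ugmor =1 g1. Proof. exact: ffunE. Qed.

End MakeMorphism.

Definition chain (Z : ugraph) : rel (harc Z) := fun a b => tgt a == src b.

Lemma mor_chain (X Y : ugraph) (f : ugmor X Y) :
  {homo mor1 f : a b / chain a b >-> chain a b}.
Proof. by move=> a b /eqP ab; rewrite /chain -mor_tgt -mor_src ab. Qed.

Section ClosedWalks.
Variables (Z : ugraph) (k : nat).

Definition trace (h : ugmor (cU k) Z) : k.-tuple (harc Z) :=
  [tuple mor1 h (i, true) | i < k].

Lemma tnth_trace (h : ugmor (cU k) Z) (i : 'I_k) :
  tnth (trace h) i = mor1 h (i, true).
Proof. exact: tnth_mktuple. Qed.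

Lemma trace_cycle (h : ugmor (cU k) Z) : cycle (@chain Z) (trace h).
Proof.
apply/cycle_tnthP => i; rewrite !tnth_trace /chain.
by rewrite -(mor_tgt h (i, true)) -(mor_src h (ordS i, true)).
Qed.

(* Nodes and half-arcs [n]^- of c^k_U are sources and reverses of the [n]^+. *)
Lemma trace_inj : injective trace.
Proof.
move=> g h /(congr1 (fun t => tnth t _)) E.
have E1 i : mor1 g (i, true) = mor1 h (i, true) by have := E i; rewrite !tnth_trace.
apply: ugmor_ext => [i | [i []]] //.
- by rewrite -[i]/(@src (cU k) (i, true)) !mor_src E1.
- by rewrite -[(i, false)]/(@Defs.inv (cU k) (i, true)) !mor_inv E1.
Qed.

Variables (t : k.-tuple (harc Z)) (t_closed : cycle (@chain Z) t).

Definition walk_node (i : node (cU k)) : node Z := src (tnth t i).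

Definition walk_arc (a : harc (cU k)) : harc Z :=
  if a.2 then tnth t a.1 else Defs.inv (tnth t a.1).

Let closed_at := elimT (cycle_tnthP _ _) t_closed.

Lemma walk_src (a : harc (cU k)) : walk_node (src a) = src (walk_arc a).
Proof.
case: a => i [] //=; rewrite /walk_node /cyc_src /walk_arc /= src_inv.
by rewrite (eqP (closed_at i)).
Qed.

Lemma walk_tgt (a : harc (cU k)) : walk_node (tgt a) = tgt (walk_arc a).
Proof.
case: a => i [] /=; rewrite /walk_node /cyc_tgt /walk_arc /= ?tgt_inv //.
by rewrite (eqP (closed_at i)).
Qed.

Lemma walk_inv (a : harc (cU k)) : walk_arc (Defs.inv a) = Defs.inv (walk_arc a).
Proof. by case: a => i [] //=; rewrite /walk_arc /= inv_invol. Qed.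

Definition walk_mor : ugmor (cU k) Z := mk_ugmor walk_src walk_tgt walk_inv.

Lemma trace_walk_mor : trace walk_mor = t.
Proof. by apply: eq_from_tnth => i; rewrite tnth_trace mk_ugmor1. Qed.

End ClosedWalks.

Lemma trace_comp (X Y : ugraph) (f : ugmor X Y) (k : nat) (h : ugmor (cU k) X) :
  trace (ugcomp f h) = map_tuple (mor1 f) (trace h).
Proof. by apply: eq_from_tnth => i; rewrite tnth_trace tnth_map tnth_trace /= ffunE. Qed.

Definition back_forth (Z : ugraph) (u : harc Z) : 2.-tuple (harc Z) :=
  [tuple u; Defs.inv u].

Lemma back_forth_cycle (Z : ugraph) (u : harc Z) : cycle (@chain Z) (back_forth u).
Proof. by rewrite /= /chain src_inv tgt_inv !eqxx. Qed.

Lemma connect_walk (Z : ugraph) (x y : node Z) :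
  connect (@ug_adj Z) x y ->
  x = y \/ exists a s, [/\ src a = x, path (@chain Z) a s & tgt (last a s) = y].
Proof.
case/connectP => p; elim: p x => [|z p IH] x /=; first by move=> _ ->; left.
case/andP => /existsP[a /andP[/eqP src_a /eqP tgt_a]] walk_p last_p; right.
have [z_y | [b [s [src_b walk_s last_s]]]] := IH z walk_p last_p.
  by exists a, [::]; rewrite /= tgt_a z_y.
by exists a, (b :: s); rewrite /= /chain tgt_a src_b walk_s eqxx.
Qed.

Section CountingClosedWalks.
Variables (X Y : ugraph) (f : ugmor X Y).

Let compose (k : nat) (h : ugmor (cU k) X) : ugmor (cU k) Y := ugcomp f h.

Lemma lift_closed_walk (k : nat) (t : k.-tuple (harc Y)) :
  bijective (@compose k) -> cycle (@chain Y) t ->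
  exists2 c : k.-tuple (harc X), cycle (@chain X) c & map_tuple (mor1 f) c = t.
Proof.
move=> [g _ fgK] t_closed; exists (trace (g (walk_mor t_closed))).
  exact: trace_cycle.
by rewrite -trace_comp [ugcomp _ _]fgK trace_walk_mor.
Qed.

(* Two half-arcs with the same image give back-and-forth walks with the same
   image; injectivity in length 2 makes these walks, hence the arcs, equal. *)
Lemma harc_injective : injective (@compose 2) -> injective (mor1 f).
Proof.
move=> comp_inj u v fu_fv.
have same_image : compose (walk_mor (back_forth_cycle u)) =
                  compose (walk_mor (back_forth_cycle v)).
  apply: trace_inj; rewrite !trace_comp !trace_walk_mor.
  by apply: val_inj; rewrite /= !mor_inv fu_fv.
have := congr1 (@trace X 2) (comp_inj _ _ same_image).
by rewrite !trace_walk_mor => /(congr1 val) [].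
Qed.

(* A half-arc w of Y is the first step of a lift of its back-and-forth walk. *)
Lemma harc_surjective : bijective (@compose 2) -> forall w, exists u, mor1 f u = w.
Proof.
move=> comp_bij w; have [c _ fc] := lift_closed_walk comp_bij (back_forth_cycle w).
by exists (tnth c ord0); have := congr1 (fun t => tnth t ord0) fc; rewrite tnth_map.
Qed.

(* A node y of Y is either the image of x0 or the source of a half-arc, and
   the sources of lifted half-arcs map to the sources of their images. *)
Lemma node_surjective (x0 : node X) :
  (forall y y' : node Y, connect (@ug_adj Y) y y') ->
  (forall w, exists u, mor1 f u = w) -> forall y, exists x, mor0 f x = y.
Proof.
move=> Y_conn f1_surj y.
have [->|[a [_ [src_a _ _]]]] := connect_walk (Y_conn y (mor0 f x0)); first by exists x0.
by have [u fu] := f1_surj a; exists (src u); rewrite mor_src fu.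
Qed.

Lemma map_walk_closed (a : harc X) (s : seq (harc X)) :
  path (@chain X) a s -> mor0 f (tgt (last a s)) = mor0 f (src a) ->
  cycle (@chain Y) (map (mor1 f) (a :: s)).
Proof.
move=> walk_s ends; rewrite cycle_consE (homo_path (@mor_chain _ _ f)) //=.
by rewrite last_map /chain -mor_tgt -mor_src ends.
Qed.

(* A walk between two nodes with the same image is the unique lift of its
   closed image, and lifts of closed walks are closed. *)
Lemma node_injective :
  (forall x x' : node X, connect (@ug_adj X) x x') -> injective (mor1 f) ->
  (forall k, 0 < k -> bijective (@compose k)) -> injective (mor0 f).
Proof.
move=> X_conn f1_inj comp_bij x y fx_fy.
have [//|[a [s [src_a walk_s last_s]]]] := connect_walk (X_conn x y).
pose w := in_tuple (a :: s).
have w_image_closed : cycle (@chain Y) (map_tuple (mor1 f) w).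
  by apply: map_walk_closed; rewrite // last_s src_a fx_fy.
have [c c_closed fc_fw] := lift_closed_walk (comp_bij (size (a :: s)) isT) w_image_closed.
have c_w : c = w by apply/val_inj/(inj_map f1_inj); have := congr1 val fc_fw.
by move: c_closed; rewrite c_w cycle_consE /chain last_s src_a => /andP[_ /eqP].
Qed.

End CountingClosedWalks.

Lemma ugiso_of_bijective (X Y : ugraph) (f : ugmor X Y) :
  bijective (mor0 f) -> bijective (mor1 f) -> ugiso f.
Proof.
move=> [g0 f0K g0K] [g1 f1K g1K].
have g_src w : g0 (src w) = src (g1 w).
  by apply: (can_inj f0K); rewrite g0K mor_src g1K.
have g_tgt w : g0 (tgt w) = tgt (g1 w).
  by apply: (can_inj f0K); rewrite g0K mor_tgt g1K.
have g_inv w : g1 (Defs.inv w) = Defs.inv (g1 w).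
  by apply: (can_inj f1K); rewrite g1K mor_inv g1K.
exists (mk_ugmor g_src g_tgt g_inv).
by split; apply: ugmor_ext => z /=; rewrite !ffunE ?mk_ugmor0 ?mk_ugmor1.
Qed.

Lemma inj_surj_bij (A : choiceType) (B : eqType) (h : A -> B) :
  injective h -> (forall y, exists x, h x = y) -> bijective h.
Proof.
move=> h_inj h_surj.
have h_onto y : exists x, h x == y by have [x <-] := h_surj y; exists x.
exists (fun y => xchoose (h_onto y)) => [x | y]; last exact/eqP/(xchooseP (h_onto y)).
by apply: h_inj; apply/eqP/(xchooseP (h_onto (h x))).
Qed.

Theorem proposition4p8 (X Y : ugraph) (f : ugmor X Y) :
  ug_connected X -> ug_connected Y ->
  (forall p : nat, 0 < p ->
     bijective (fun h : ugmor (cU p) X => ugcomp f h)) ->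
  ugiso f.
Proof.
move=> [[x0 _] X_conn] [_ Y_conn] comp_bij.
have f1_inj := harc_injective (bij_inj (comp_bij 2 isT)).
have f1_surj := harc_surjective (comp_bij 2 isT).
have f0_inj := node_injective X_conn f1_inj comp_bij.
have f0_surj := node_surjective x0 Y_conn f1_surj.
exact: ugiso_of_bijective (inj_surj_bij f0_inj f0_surj) (inj_surj_bij f1_inj f1_surj).
Qed.
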